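(* Fix positive integers $n_x$ and $N_h$, a scalar $\epsilon_r>0$ and a scalar $\eta>0$. Let $A_j, B, C, C_J, L, \Delta A \in \mathbb{R}^{n_x\times n_x}$ be given, with $B$ invertible, and let $C$ and $C_J$ be invertible. For $K\in\mathbb{R}^{n_x\times n_x}$ define $F_p(K,\delta_j)$, $F_r(K,\delta_j)$, $q(K,\delta_j)$ and $\kappa=F_p(K,\delta_j)F_r(K,\delta_j)^{-1}$ as in the context. Then there is a constant $\mu$ that does not depend on $K$ such that for every $K\in\mathbb{R}^{n_x\times n_x}$ $$q(K,\delta_j)\le \mu\,\bar q(K,\delta_j)^{f},\qquad \bar q(K,\delta_j)\triangleq \eta\|K\|_F^2+\sum_{i=2}^{n_xN_h}\sigma_i(\kappa^{-1}),\qquad f\triangleq n_xN_h-1 .$$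
   Context: Here $\delta_j$ labels one fixed realization of a parametric uncertainty. $A_j$ is the plant system matrix under $\delta_j$, $B$ is the input matrix, $C$ the measurement matrix, $C_J$ the performance output matrix, $L$ an observer gain, $\Delta A$ a given matrix (the uncertainty perturbation of the system matrix), and $K$ the feedback controller. Set $A_{x,j}\triangleq A_j+BKC$ and $A_{e,j}\triangleq A_j-LC$. For $\upsilon\in\{x,e\}$, $F_{\upsilon a}\in\mathbb{R}^{n_xN_h\times n_xN_h}$ is the block lower-triangular matrix whose $(k,l)$ block ($k,l=1,\dots,N_h$, blocks of size $n_x\times n_x$) is $A_{\upsilon,j}^{k-l}B$ for $k\ge l$ and $0$ for $k<l$. In particular $F_{xa}=F_{xa}(K,\delta_j)$ depends on $K$, while $F_{ea}=F_{ea}(\delta_j)$ does not. $F_{ex}(\delta_j)\in\mathbb{R}^{n_xN_h\times n_xN_h}$ is the strictly block lower-triangular matrix whose $(k,l)$ block is $A_{e,j}^{k-l-1}\Delta A$ for $k>l$ and $0$ otherwise. Define $$F_p(K,\delta_j)=(I_{N_h}\otimes C_J)F_{xa}(K,\delta_j),\qquad F_r(K,\delta_j)=(I_{N_h}\otimes C)\big(F_{ea}(\delta_j)+F_{ex}(\delta_j)F_{xa}(K,\delta_j)\big),$$ and $$q(K,\delta_j)=\sup\{\|F_p(K,\delta_j)\mathbf a\|_2^2:\ \mathbf a\in\mathbb{R}^{n_xN_h},\ \|F_r(K,\delta_j)\mathbf a\|_2^2\le\epsilon_r\}.$$ This is the worst-case squared performance-output energy over the horizon $N_h$ caused by a stacked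 attack sequence $\mathbf a$, subject to a bound on the detection-output energy and with zero initial state. $\|K\|_F$ is the Frobenius norm. $\sigma_1(M)\le\sigma_2(M)\le\dots\le\sigma_{n_xN_h}(M)$ denote the singular values of $M$ in nondecreasing order, so the sum in $\bar q$ omits the smallest singular value of $\kappa^{-1}$. *)

From HB Require Import structures.
From mathcomp Require Import all_boot all_order all_algebra.
From mathcomp Require Import all_classical all_reals ereal.
Set Implicit Arguments. Unset Strict Implicit. Unset Printing Implicit Defensive.
Import Order.TTheory GRing.Theory Num.Theory.
Local Open Scope ring_scope.

Section Defs.
Variable R : realType.

(* block index of a stacked index i : 'I_(Nh*nx): (block k, position r);
   row-major order, i.e. i = k*nx + r *)
Definition blkidx (Nh nx : nat) (i : 'I_(Nh * nx)) : 'I_Nh * 'I_nx :=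
  enum_val (cast_ord (esym (mxvec_cast Nh nx)) i).

Definition blk (Nh nx : nat) (F : 'I_Nh -> 'I_Nh -> 'M[R]_nx) : 'M[R]_(Nh * nx) :=
  \matrix_(i, j) F (blkidx i).1 (blkidx j).1 (blkidx i).2 (blkidx j).2.

Definition kronI (Nh nx : nat) (M : 'M[R]_nx) : 'M[R]_(Nh * nx) :=
  blk (fun k l => if k == l then M else 0).

Definition Fa (Nh nx : nat) (Av B : 'M[R]_nx) : 'M[R]_(Nh * nx) :=
  blk (fun k l : 'I_Nh => if (l <= k)%N then Av ^+ (k - l) *m B else 0).

Definition Fex (Nh nx : nat) (Ae dA : 'M[R]_nx) : 'M[R]_(Nh * nx) :=
  blk (fun k l : 'I_Nh => if (l < k)%N then Ae ^+ (k - l - 1) *m dA else 0).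

Definition Axj (nx : nat) (Aj B C K : 'M[R]_nx) := Aj + B *m K *m C.
Definition Aej (nx : nat) (Aj L C : 'M[R]_nx) := Aj - L *m C.

Definition Fp (Nh nx : nat) (Aj B C CJ K : 'M[R]_nx) : 'M[R]_(Nh * nx) :=
  kronI Nh CJ *m Fa Nh (Axj Aj B C K) B.

Definition Fr (Nh nx : nat) (Aj B C L dA K : 'M[R]_nx) : 'M[R]_(Nh * nx) :=
  kronI Nh C *m (Fa Nh (Aej Aj L C) B
                 + Fex Nh (Aej Aj L C) dA *m Fa Nh (Axj Aj B C K) B).

Definition sqnorm (n : nat) (v : 'cV[R]_n) : R := \sum_i (v i 0) ^+ 2.

Definition frob2 (m n : nat) (M : 'M[R]_(m, n)) : R := \sum_i \sum_j (M i j) ^+ 2.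

Definition qfun (Nh nx : nat) (epsr : R) (Aj B C CJ L dA K : 'M[R]_nx) : \bar R :=
  ereal_sup [set (sqnorm (Fp Nh Aj B C CJ K *m a))%:E | a in
             [set a : 'cV[R]_(Nh * nx) | sqnorm (Fr Nh Aj B C L dA K *m a) <= epsr]].

(* s is the vector of singular values of M, in nondecreasing order:
   M = U diag(s) V^T with U, V orthogonal, s >= 0 nondecreasing *)
Definition singvals (n : nat) (M : 'M[R]_n) (s : 'I_n -> R) : Prop :=
  [/\ (forall i, 0 <= s i),
      (forall i j : 'I_n, (i <= j)%N -> s i <= s j) &
      exists U V : 'M[R]_n,
        [/\ U^T *m U = 1%:M, V^T *m V = 1%:M &
            M = U *m diag_mx (\row_i s i) *m V^T]].

End Defs.

From mathcomp Require Import all_boot all_order all_algebra.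
From mathcomp Require Import all_classical all_reals ereal.
From mathcomp Require Import zify ring lra.
Import Order.TTheory GRing.Theory Num.Theory.
Set Implicit Arguments. Unset Strict Implicit. Unset Printing Implicit Defensive.
Local Open Scope ring_scope.

(* Let S be the block down-shift and T_Z := I - S (x) Z ([bidiag Z]).  Then
   T_Z F_a(Z, W) = I (x) W and T_Z F_ex(Z, dA) = S (x) dA, so with E = A_j - LC,
   X = A_j + BKC and Y = X - dA one gets T_E (F_ea + F_ex F_xa) = T_Y F_xa and
     kappa = F_p F_r^-1 = (I (x) C_J) F_a(Y, I) T_E (I (x) C^-1),
   whose squared Frobenius norm is bounded by a polynomial of degree N_h - 1
   in |K|_F^2.  Hence q <= eps_r |kappa|_F^2.  Moreover the largest singular
   value sigma of kappa^-1 satisfies 1 <= sigma^2 |kappa|_F^2 and sigma <= qbar: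
   the upper bound gives the estimate when qbar >= 1, the lower one when qbar < 1. *)

Section BlockMatrices.
Variables (R : realType) (Nh nx : nat).
Implicit Types (F G : 'I_Nh -> 'I_Nh -> 'M[R]_nx) (M : 'M[R]_nx).

Lemma blkidx_bij : bijective (@blkidx Nh nx).
Proof.
exists (fun p => cast_ord (mxvec_cast Nh nx) (enum_rank p)) => [i|p].
  by rewrite /blkidx enum_valK cast_ordKV.
by rewrite /blkidx cast_ordK enum_rankK.
Qed.

Lemma sum_blkidx (f : 'I_Nh -> 'I_nx -> R) :
  \sum_i f (blkidx i).1 (blkidx i).2 = \sum_k \sum_r f k r.
Proof.
rewrite pair_big (reindex (@blkidx Nh nx)) //=.
exact: onW_bij blkidx_bij.
Qed.

Lemma eq_blk F G : (forall k l, F k l = G k l) -> blk F = blk G.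
Proof. by move=> FG; apply/matrixP => i j; rewrite !mxE FG. Qed.

Lemma blk_mul F G : blk F *m blk G = blk (fun k l => \sum_m F k m *m G m l).
Proof.
apply/matrixP => i j; rewrite !mxE summxE.
under eq_bigr do rewrite !mxE.
rewrite (sum_blkidx (fun m r => F _ m _ r * G m _ r _)).
by apply: eq_bigr => m _; rewrite mxE.
Qed.

Lemma kronI_mul M1 M2 : kronI Nh M1 *m kronI Nh M2 = kronI Nh (M1 *m M2).
Proof.
rewrite blk_mul; apply: eq_blk => k l.
rewrite (bigD1 k) //= eqxx big1 => [|m /negbTE mk]; last by rewrite eq_sym mk mul0mx.
by rewrite addr0; case: eqP; rewrite ?mulmx0.
Qed.

Lemma kronI1 : kronI Nh (1%:M : 'M[R]_nx) = 1%:M.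
Proof.
apply/matrixP => i j; rewrite !mxE -(inj_eq (bij_inj blkidx_bij)).
case: (blkidx i) (blkidx j) => k r [l r'] /=.
by rewrite xpair_eqE; case: (k == l); rewrite !mxE.
Qed.

Lemma kronI_unit M : M \in unitmx -> kronI Nh M \in unitmx.
Proof.
move=> uM; have := kronI_mul M (invmx M).
by rewrite mulmxV // kronI1 => /mulmx1_unit [].
Qed.

End BlockMatrices.

Lemma val_ord_pred n (k : 'I_n) : (0 < k)%N -> ord_pred k = k.-1 :> nat.
Proof.
move=> k_gt0 /=; have ltkn := ltn_ord k.
by rewrite -(prednK k_gt0) addSn /= modnDr modn_small // (leq_trans (leqnSn _)) ?prednK.
Qed.

Section BlockToeplitz.
Variables (R : realType) (Nh nx : nat).
Implicit Types (Z W D : 'M[R]_nx).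

Definition subdiag D : 'M[R]_(Nh * nx) :=
  blk (fun k l : 'I_Nh => if k == l.+1 :> nat then D else 0).

Definition bidiag Z : 'M[R]_(Nh * nx) := 1%:M - subdiag Z.

Lemma bidiag_mul Z (G : 'I_Nh -> 'I_Nh -> 'M[R]_nx) :
  bidiag Z *m blk G =
  blk (fun k l => G k l - (if (0 < k)%N then Z *m G (ord_pred k) l else 0)).
Proof.
have shiftG (k l : 'I_Nh) : \sum_(m < Nh) (if k == m.+1 :> nat then Z else 0) *m G m l =
                   if (0 < k)%N then Z *m G (ord_pred k) l else 0.
  have [k0|k_gt0] := posnP k; first by rewrite big1 // => m _; rewrite k0 mul0mx.
  rewrite (bigD1 (ord_pred k)) // val_ord_pred // prednK // eqxx /= big1 ?addr0 //.
  move=> m /eqP mk; case: eqP => [km|]; last by rewrite mul0mx.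
  by case: mk; apply: ord_inj; rewrite val_ord_pred // km.
rewrite /bidiag /subdiag mulmxBl mul1mx blk_mul.
by apply/matrixP => i j; rewrite !mxE shiftG.
Qed.

Lemma bidiag_toeplitz Z W c :
  bidiag Z *m blk (fun k l : 'I_Nh =>
    if (l + c <= k)%N then Z ^+ (k - (l + c))%N *m W else 0) =
  blk (fun k l : 'I_Nh => if k == (l + c)%N :> nat then W else 0).
Proof.
rewrite bidiag_mul; apply: eq_blk => k l; set m := (l + c)%N.
have [k0|k_gt0] := posnP k.
  rewrite k0 leqn0 subr0 eq_sym; case: eqP => // ->.
  by rewrite subnn expr0 mul1mx.
rewrite val_ord_pred //; case: ltngtP => [mk|km|km].
- rewrite (_ : (m <= k.-1)%N); last by lia.
  by rewrite !mulmxE mulrA -exprS (_ : (k.-1 - m).+1 = k - m)%N ?subrr //; lia.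
- by rewrite (_ : (m <= k.-1)%N = false) ?mulmx0 ?subr0 //; lia.
- rewrite -km subnn expr0 mul1mx (_ : (m <= m.-1)%N = false) ?mulmx0 ?subr0 //.
  by move: k_gt0; rewrite -km; lia.
Qed.

Lemma bidiag_Fa Z W : bidiag Z *m Fa Nh Z W = kronI Nh W.
Proof.
have /= := bidiag_toeplitz Z W 0.
by under eq_blk do rewrite addn0; under [RHS]eq_blk do rewrite addn0.
Qed.

Lemma bidiag_Fex Z D : bidiag Z *m Fex Nh Z D = subdiag D.
Proof.
have /= := bidiag_toeplitz Z D 1.
by under eq_blk do rewrite subnDA addn1; under [RHS]eq_blk do rewrite addn1.
Qed.

Lemma subdiagB Z D : subdiag (Z - D) = subdiag Z - subdiag D.
Proof. by apply/matrixP => i j; rewrite !mxE; case: ifP; rewrite !mxE ?subr0. Qed.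

Lemma bidiagD_subdiag Z D : bidiag Z + subdiag D = bidiag (Z - D).
Proof. by rewrite /bidiag subdiagB opprB addrA addrAC. Qed.

Lemma Fa1_bidiag Z : Fa Nh Z 1%:M *m bidiag Z = 1%:M.
Proof. by apply: mulmx1C; rewrite bidiag_Fa kronI1. Qed.

Lemma bidiag_unit Z : bidiag Z \in unitmx.
Proof. by case/mulmx1_unit: (Fa1_bidiag Z). Qed.

Lemma Fa_unit Z W : W \in unitmx -> Fa Nh Z W \in unitmx.
Proof. by move/(kronI_unit Nh); rewrite -(bidiag_Fa Z) unitmx_mul => /andP[]. Qed.

End BlockToeplitz.

Section Frobenius.
Variable R : realType.

Lemma sqr_sum_mul_le n (a b : 'I_n -> R) :
  (\sum_i a i * b i) ^+ 2 <= (\sum_i a i ^+ 2) * (\sum_i b i ^+ 2).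
Proof.
pose sab := \sum_i \sum_j a i ^+ 2 * b j ^+ 2.
have sabE : sab = (\sum_i a i ^+ 2) * (\sum_i b i ^+ 2).
  by rewrite mulr_suml; apply: eq_bigr => i _; rewrite mulr_sumr.
have sba : \sum_i \sum_j a j ^+ 2 * b i ^+ 2 = sab by rewrite exchange_big.
have sqrE : \sum_i \sum_j (a i * b i) * (a j * b j) = (\sum_i a i * b i) ^+ 2.
  by rewrite expr2 mulr_suml; apply: eq_bigr => i _; rewrite mulr_sumr.
have lagrange : \sum_i \sum_j (a i * b j - a j * b i) ^+ 2 =
    sab + \sum_i \sum_j a j ^+ 2 * b i ^+ 2 -
    2 * \sum_i \sum_j (a i * b i) * (a j * b j).
  rewrite mulr_sumr -!big_split -sumrB; apply: eq_bigr => i _ /=.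
  by rewrite mulr_sumr -!big_split -sumrB; apply: eq_bigr => j _ /=; ring.
have : 0 <= \sum_i \sum_j (a i * b j - a j * b i) ^+ 2.
  by apply: sumr_ge0 => i _; apply: sumr_ge0 => j _; apply: sqr_ge0.
rewrite lagrange sba sqrE sabE; lra.
Qed.

Lemma frob2_ge0 m n (A : 'M[R]_(m, n)) : 0 <= frob2 A.
Proof. by apply: sumr_ge0 => i _; apply: sumr_ge0 => j _; apply: sqr_ge0. Qed.

Lemma frob2_0 m n : frob2 (0 : 'M[R]_(m, n)) = 0.
Proof. by rewrite /frob2 big1 // => i _; rewrite big1 // => j _; rewrite mxE expr0n. Qed.

Lemma frob2_1mx n : frob2 (1%:M : 'M[R]_n) = n%:R.
Proof.
rewrite /frob2 -[n in RHS]card_ord -sum1_card natr_sum; apply: eq_bigr => i _.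
rewrite (bigD1 i) //= big1 ?mxE ?eqxx ?addr0 ?expr1n // => j ji.
by rewrite mxE eq_sym (negbTE ji) expr0n.
Qed.

Lemma frob2D_le m n (A B : 'M[R]_(m, n)) : frob2 (A + B) <= 2 * frob2 A + 2 * frob2 B.
Proof.
rewrite /frob2 !mulr_sumr -big_split /=; apply: ler_sum => i _.
rewrite !mulr_sumr -big_split /=; apply: ler_sum => j _; rewrite mxE.
have := sqr_ge0 (A i j - B i j); nra.
Qed.

Lemma frob2_mulmx_le m n p (A : 'M[R]_(m, n)) (B : 'M[R]_(n, p)) :
  frob2 (A *m B) <= frob2 A * frob2 B.
Proof.
apply: (@le_trans _ _ (\sum_i \sum_j (\sum_k A i k ^+ 2) * (\sum_k B k j ^+ 2))).
  by apply: ler_sum => i _; apply: ler_sum => j _; rewrite mxE sqr_sum_mul_le.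
rewrite /frob2 [\sum_k \sum_j B k j ^+ 2]exchange_big mulr_suml.
by apply: ler_sum => i _; rewrite mulr_sumr.
Qed.

Lemma frob2_expr_le n (Z : 'M[R]_n) k : frob2 (Z ^+ k) <= n%:R * (1 + frob2 Z) ^+ k.
Proof.
elim: k => [|k IHk]; first by rewrite !expr0 frob2_1mx mulr1.
rewrite exprS -mulmxE; apply: le_trans (frob2_mulmx_le _ _) _.
rewrite exprS mulrCA; apply: ler_pM; rewrite ?frob2_ge0 //.
by rewrite lerDr.
Qed.

Lemma frob2_blk Nh nx (F : 'I_Nh -> 'I_Nh -> 'M[R]_nx) :
  frob2 (blk F) = \sum_k \sum_l frob2 (F k l).
Proof.
rewrite /frob2 (eq_bigr _ (fun k _ => exchange_big _ _ _ _ _ _)) /=.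
rewrite -(sum_blkidx (fun k r => \sum_l \sum_r' F k l r r' ^+ 2)).
apply: eq_bigr => i _; rewrite -sum_blkidx.
by apply: eq_bigr => j _; rewrite mxE.
Qed.

Lemma frob2_Fa1_le Nh nx (Y : 'M[R]_nx) :
  frob2 (Fa Nh Y 1%:M) <= (Nh * Nh * nx)%:R * (1 + frob2 Y) ^+ Nh.-1.
Proof.
have Y1_ge1 : 1 <= 1 + frob2 Y by rewrite lerDl frob2_ge0.
have blk_le (k l : 'I_Nh) : frob2 (if (l <= k)%N then Y ^+ (k - l) *m 1%:M else 0)
                            <= nx%:R * (1 + frob2 Y) ^+ Nh.-1.
  case: ifP => _; last by rewrite frob2_0 mulr_ge0 ?exprn_ge0 // (le_trans ler01).
  rewrite mulmx1; apply: le_trans (frob2_expr_le _ _) _.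
  by rewrite ler_wpM2l // ler_weXn2l //; have := ltn_ord k; lia.
rewrite frob2_blk; apply: le_trans (ler_sum _ (fun k _ => ler_sum _ (fun l _ => blk_le k l))) _.
by rewrite !sumr_const !card_ord -mulrnA -mulrnAl -(mulr_natr nx%:R) -natrM mulnC.
Qed.

Lemma sqnorm_frob2 n (v : 'cV[R]_n) : sqnorm v = frob2 v.
Proof. by apply: eq_bigr => i _; rewrite big_ord1. Qed.

Lemma sqnorm_mulmx_le m n (A : 'M[R]_(m, n)) v : sqnorm (A *m v) <= frob2 A * sqnorm v.
Proof. by rewrite !sqnorm_frob2; apply: frob2_mulmx_le. Qed.

End Frobenius.

Section SingularValues.
Variable R : realType.

Lemma sqnorm_orthomx n (W : 'M[R]_n) v : W^T *m W = 1%:M -> sqnorm (W *m v) = sqnorm v.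
Proof.
have sqnormE m (u : 'cV[R]_m) : sqnorm u = (u^T *m u) 0 0.
  by rewrite mxE; apply: eq_bigr => i _; rewrite mxE expr2.
by move=> WtW; rewrite !sqnormE trmx_mul -mulmxA (mulmxA W^T) WtW mul1mx.
Qed.

Lemma sqnorm_delta n (i0 : 'I_n) : sqnorm (delta_mx i0 0 : 'cV[R]_n) = 1.
Proof.
rewrite /sqnorm (bigD1 i0) //= big1 ?mxE ?eqxx ?addr0 ?expr1n // => j ji.
by rewrite mxE (negbTE ji) expr0n.
Qed.

Lemma singvals_sqnorm_le n (M : 'M[R]_n) s i0 x :
  singvals M s -> (forall i, s i <= s i0) -> sqnorm (M *m x) <= s i0 ^+ 2 * sqnorm x.
Proof.
case=> s_ge0 _ [U [V [UtU VtV ->]]] s_le.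
have VTorth : V^T^T *m V^T = 1%:M by rewrite trmxK; apply: mulmx1C.
rewrite -!mulmxA sqnorm_orthomx // -(sqnorm_orthomx x VTorth).
rewrite /sqnorm mulr_sumr; apply: ler_sum => i _.
rewrite mul_diag_mx !mxE exprMn ler_wpM2r ?sqr_ge0 //.
by rewrite !expr2; apply: ler_pM.
Qed.

Lemma singvals_invmx_ge n (M : 'M[R]_n) s i0 :
  M \in unitmx -> singvals (invmx M) s -> (forall i, s i <= s i0) ->
  1 <= s i0 ^+ 2 * frob2 M.
Proof.
move=> uM sv s_le; pose e : 'cV[R]_n := delta_mx i0 0.
have := singvals_sqnorm_le (M *m e) sv s_le.
rewrite mulmxA mulVmx // mul1mx sqnorm_delta => /le_trans; apply.
rewrite ler_wpM2l ?sqr_ge0 //.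
by have := sqnorm_mulmx_le M e; rewrite sqnorm_delta mulr1.
Qed.

Lemma singvals_invmx_sum_ge n (M : 'M[R]_n) s :
  (1 < n)%N -> M \in unitmx -> singvals (invmx M) s ->
  1 <= (\sum_(i < n | (0 < i)%N) s i) ^+ 2 * frob2 M.
Proof.
move=> n_gt1 uM sv; have [s_ge0 s_mono _] := sv.
have n_gt0 := ltnW n_gt1.
have imax_lt : (n.-1 < n)%N by rewrite ltn_predL.
pose imax := Ordinal imax_lt.
have s_le i : s i <= s imax by apply: s_mono; rewrite /= -ltnS prednK.
apply: le_trans (singvals_invmx_ge uM sv s_le) _.
rewrite ler_wpM2r ?frob2_ge0 // lerXn2r ?nnegrE ?sumr_ge0 //.
by rewrite (bigD1 imax) /= ?ltn_predRL // lerDl sumr_ge0.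
Qed.

End SingularValues.

Lemma affine_le_mul_max (R : realFieldType) (a b eta t S : R) :
  0 <= a -> 0 <= b -> 0 < eta -> 0 <= t -> 0 <= S ->
  a + b * t <= (a + b / eta) * Num.max 1 (eta * t + S).
Proof.
move=> a0 b0 eta0 t0 S0; set m := Num.max _ _.
have m_ge1 : 1 <= m by rewrite le_max lexx.
have etat_le : eta * t <= m by rewrite le_max lerDl S0 orbT.
have -> : b * t = b / eta * (eta * t) by field; rewrite gt_eqF.
rewrite mulrDl; apply: lerD; first by rewrite -[leLHS]mulr1 ler_wpM2l.
by rewrite ler_wpM2l // divr_ge0 // ltW.
Qed.

Lemma le_two_regime_bound (R : realFieldType) (P Z Q : R) (d f : nat) :
  0 <= Z -> 0 <= Q -> (d <= f)%N ->
  P <= Z * Num.max 1 Q ^+ d -> ((0 < f)%N -> 1 <= Q ^+ 2 * P) ->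
  P <= (Z + Z ^+ f.+1) * Q ^+ f.
Proof.
move=> Z0 Q0 df P_le P_ge.
have ZQf_ge0 : 0 <= Z * Q ^+ f by rewrite mulr_ge0 ?exprn_ge0.
have ZfQf_ge0 : 0 <= Z ^+ f.+1 * Q ^+ f by rewrite mulr_ge0 ?exprn_ge0.
rewrite mulrDl; have [Q_ge1|Q_lt1] := lerP 1 Q.
  rewrite (max_idPr Q_ge1) in P_le; apply: le_trans P_le _.
  by rewrite ler_wpDr // ler_wpM2l // ler_weXn2l.
rewrite (max_idPl (ltW Q_lt1)) expr1n mulr1 in P_le.
case: f df P_ge ZQf_ge0 ZfQf_ge0 => [|f] _ P_ge ZQf_ge0 ZfQf_ge0; first by rewrite !expr0 !mulr1; lra.
have ZQ2_ge1 : 1 <= Z * Q ^+ 2.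
  by apply: le_trans (P_ge isT) _; rewrite mulrC ler_wpM2r ?exprn_ge0.
(* for Q < 1 only the lower bound helps: it makes Z itself dominated by Z^(f+1) Q^f *)
have : Z <= Z ^+ f.+2 * Q ^+ f.+1.
  apply: (@le_trans _ _ (Z * (Z * Q ^+ 2) ^+ f.+1)).
    by rewrite -[leLHS]mulr1 ler_wpM2l // exprn_ege1.
  rewrite exprMn -exprM mulrA -exprS ler_wpM2l ?exprn_ge0 //.
  rewrite mul2n -addnn exprD -[leRHS]mulr1 ler_wpM2l ?exprn_ge0 //.
  by rewrite exprn_ile1 // ltW.
lra.
Qed.

Section Kappa.
Variables (R : realType) (Nh nx : nat) (Aj B C CJ L dA : 'M[R]_nx).
Hypotheses (B_unit : B \in unitmx) (C_unit : C \in unitmx).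

Local Notation E := (Aej Aj L C).
Local Notation X K := (Axj Aj B C K).

Definition kappa (K : 'M[R]_nx) : 'M[R]_(Nh * nx) :=
  kronI Nh CJ *m Fa Nh (X K - dA) 1%:M *m bidiag Nh E *m kronI Nh (invmx C).

Definition kappa_coef (eta : R) : R :=
  frob2 (kronI Nh CJ) * frob2 (bidiag Nh E) * frob2 (kronI Nh (invmx C)) *
  (Nh * Nh * nx)%:R * (1 + 2 * frob2 (Aj - dA) + 2 * (frob2 B * frob2 C) / eta) ^+ Nh.-1.

Lemma bidiag_Fr_factor K :
  bidiag Nh E *m (Fa Nh E B + Fex Nh E dA *m Fa Nh (X K) B) =
  bidiag Nh (X K - dA) *m Fa Nh (X K) B.
Proof.
by rewrite mulmxDr bidiag_Fa mulmxA bidiag_Fex -(bidiag_Fa _ (X K)) -mulmxDl bidiagD_subdiag.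
Qed.

Lemma Fr_unit K : Fr Nh Aj B C L dA K \in unitmx.
Proof.
rewrite unitmx_mul kronI_unit //=.
have : bidiag Nh (X K - dA) *m Fa Nh (X K) B \in unitmx.
  by rewrite unitmx_mul bidiag_unit Fa_unit.
by rewrite -bidiag_Fr_factor unitmx_mul => /andP[].
Qed.

Lemma Fp_kappa_Fr K : Fp Nh Aj B C CJ K = kappa K *m Fr Nh Aj B C L dA K.
Proof.
rewrite /kappa /Fr -!mulmxA (mulmxA (kronI _ (invmx C))) kronI_mul mulVmx //.
by rewrite kronI1 mul1mx bidiag_Fr_factor (mulmxA (Fa _ _ 1%:M)) Fa1_bidiag mul1mx.
Qed.

Lemma Fp_mul_invmx_Fr K : Fp Nh Aj B C CJ K *m invmx (Fr Nh Aj B C L dA K) = kappa K.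
Proof. by rewrite Fp_kappa_Fr -mulmxA mulmxV ?Fr_unit // mulmx1. Qed.

Lemma kappa_unit K : CJ \in unitmx -> kappa K \in unitmx.
Proof.
move=> CJ_unit.
by rewrite !unitmx_mul !kronI_unit ?unitmx_inv // bidiag_unit Fa_unit ?unitmx1.
Qed.

Lemma qfun_le_kappa epsr K :
  (qfun Nh epsr Aj B C CJ L dA K <= (frob2 (kappa K) * epsr)%:E)%E.
Proof.
apply/ereal_supP => _ [a a_feas <-]; rewrite lee_fin Fp_kappa_Fr -mulmxA.
by apply: le_trans (sqnorm_mulmx_le _ _) _; rewrite ler_wpM2l ?frob2_ge0.
Qed.

Lemma frob2_kappa_le K :
  frob2 (kappa K) <=
  frob2 (kronI Nh CJ) * frob2 (bidiag Nh E) * frob2 (kronI Nh (invmx C)) *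
  (Nh * Nh * nx)%:R *
  (1 + 2 * frob2 (Aj - dA) + 2 * (frob2 B * frob2 C) * frob2 K) ^+ Nh.-1.
Proof.
set Y := X K - dA.
have Y_le : 1 + frob2 Y <= 1 + 2 * frob2 (Aj - dA) + 2 * (frob2 B * frob2 C) * frob2 K.
  have -> : Y = (Aj - dA) + B *m K *m C by rewrite /Y /Axj addrAC.
  have BKC_le : frob2 (B *m K *m C) <= frob2 B * frob2 K * frob2 C.
    apply: le_trans (frob2_mulmx_le _ _) _.
    by rewrite ler_wpM2r ?frob2_ge0 // frob2_mulmx_le.
  by have := frob2D_le (Aj - dA) (B *m K *m C); lra.
have Fa1_le : frob2 (Fa Nh Y 1%:M) <= (Nh * Nh * nx)%:R *
    (1 + 2 * frob2 (Aj - dA) + 2 * (frob2 B * frob2 C) * frob2 K) ^+ Nh.-1.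
  apply: le_trans (frob2_Fa1_le _ _) _; rewrite ler_wpM2l // lerXn2r ?nnegrE //.
    by rewrite addr_ge0 ?frob2_ge0.
  by apply: le_trans Y_le; rewrite addr_ge0 ?frob2_ge0.
rewrite /kappa; apply: le_trans (frob2_mulmx_le _ _) _.
apply: le_trans (ler_wpM2r (frob2_ge0 _) (frob2_mulmx_le _ _)) _.
apply: le_trans (ler_wpM2r (frob2_ge0 _) (ler_wpM2r (frob2_ge0 _) (frob2_mulmx_le _ _))) _.
set a := frob2 (kronI Nh CJ); set b := frob2 (bidiag Nh E).
set c := frob2 (kronI Nh (invmx C)); rewrite -/Y.
have -> : a * frob2 (Fa Nh Y 1%:M) * b * c = a * b * c * frob2 (Fa Nh Y 1%:M) by ring.
by rewrite -[leRHS]mulrA ler_wpM2l // !mulr_ge0 ?frob2_ge0.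
Qed.

Lemma kappa_coef_ge0 eta : 0 < eta -> 0 <= kappa_coef eta.
Proof.
move=> eta_gt0.
by rewrite !mulr_ge0 ?exprn_ge0 ?addr_ge0 ?divr_ge0 ?mulr_ge0 ?frob2_ge0 ?(ltW eta_gt0).
Qed.

Lemma frob2_kappa_le_max eta S K : 0 < eta -> 0 <= S ->
  frob2 (kappa K) <= kappa_coef eta * Num.max 1 (eta * frob2 K + S) ^+ Nh.-1.
Proof.
move=> eta_gt0 S_ge0; apply: le_trans (frob2_kappa_le K) _.
rewrite /kappa_coef; set a := 1 + _; set b := 2 * _.
have a_ge0 : 0 <= a by rewrite addr_ge0 ?mulr_ge0 ?frob2_ge0.
have b_ge0 : 0 <= b by rewrite !mulr_ge0 ?frob2_ge0.
have ab_ge0 : 0 <= a + b / eta by rewrite addr_ge0 // divr_ge0 // ltW.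
have max_ge0 : 0 <= Num.max 1 (eta * frob2 K + S) by rewrite (le_trans ler01) // le_max lexx.
rewrite -[leRHS]mulrA -exprMn ler_wpM2l ?mulr_ge0 ?frob2_ge0 //.
rewrite lerXn2r ?nnegrE ?addr_ge0 ?mulr_ge0 ?frob2_ge0 //.
by apply: affine_le_mul_max; rewrite ?frob2_ge0.
Qed.

End Kappa.

Theorem lemma2 (R : realType) (nx Nh : nat) (epsr eta : R)
  (Aj B C CJ L dA : 'M[R]_nx) :
  (0 < nx)%N -> (0 < Nh)%N -> 0 < epsr -> 0 < eta ->
  B \in unitmx -> C \in unitmx -> CJ \in unitmx ->
  exists mu : R, forall (K : 'M[R]_nx) (s : 'I_(Nh * nx) -> R),
    singvals (invmx (Fp Nh Aj B C CJ K *m invmx (Fr Nh Aj B C L dA K))) s ->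
    (qfun Nh epsr Aj B C CJ L dA K
     <= (mu * (eta * frob2 K + \sum_(i < Nh * nx | (0 < i)%N) s i) ^+ (Nh * nx).-1)%:E)%E.
Proof.
move=> nx_gt0 _ epsr_gt0 eta_gt0 B_unit C_unit CJ_unit.
pose Z := kappa_coef Nh Aj B C CJ L dA eta.
exists (epsr * (Z + Z ^+ (Nh * nx).-1.+1)) => K s.
rewrite Fp_mul_invmx_Fr // => sv; have [s_ge0 _ _] := sv.
apply: (le_trans (qfun_le_kappa _ _ _ _ _ _ C_unit _ _)).
rewrite lee_fin mulrC -mulrA ler_wpM2l ?(ltW epsr_gt0) //.
set S := \sum_(i < _ | _) s i.
have S_ge0 : 0 <= S by rewrite sumr_ge0.
have etaK_ge0 : 0 <= eta * frob2 K by rewrite mulr_ge0 ?frob2_ge0 ?(ltW eta_gt0).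
apply: (le_two_regime_bound (d := Nh.-1)).
- exact: kappa_coef_ge0.
- exact: addr_ge0.
- by rewrite -!subn1 leq_sub2r // leq_pmulr.
- exact: frob2_kappa_le_max.
- rewrite ltn_predRL => dim_gt1.
  apply: le_trans (singvals_invmx_sum_ge dim_gt1 (kappa_unit _ _ _ _ _ C_unit K CJ_unit) sv) _.
  by rewrite ler_wpM2r ?frob2_ge0 // lerXn2r ?nnegrE ?addr_ge0 // lerDr.
Qed.
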